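(* Let $\widehat{X}=(\widehat{X}(t))_{t\in[0,1]}$ and $\widehat{Y}=(\widehat{Y}(t))_{t\in[0,1]}$ be independent one-dimensional standard Brownian bridges on $[0,1]$ (Gaussian processes with $\widehat{X}(0)=\widehat{X}(1)=0$, mean zero and $\mathrm{Cov}(\widehat{X}(s),\widehat{X}(t))=s(1-t)$ for $0\le s<t\le 1$), and let $\mu$ be a probability density function supported on $[0,1]$. Define $M_0(t)=\int_0^t\mu(s)\,ds$, $M_1(t)=\int_0^t M_0(s)\,ds$, $M_2(t)=\int_0^t M_1(s)\,ds$. Then the average radius of gyration of the two-dimensional tracked Brownian bridge $(\widehat{X}(t),\widehat{Y}(t))_{t\in\widetilde S}$ in the limit $c\to\infty$, namely $$r^2:=2\,\mathbb{E}\left[\int_0^1 \widehat{X}(t)^2\mu(t)\,dt\right],$$ satisfies $$r^2=2M_1(1)-4M_2(1).$$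
   Context: Tracking setup: $S$ is a non-homogeneous Poisson point process on $[0,1]$ with intensity $\lambda(t)=c\mu(t)$, $c>0$, and $\widetilde S=S\cup\{0,1\}$; the tracked bridge is the set of observed locations $(\widehat{X}(t),\widehat{Y}(t))$, $t\in\widetilde S$. Its gyration tensor about the tether point $(0,0)$ has entries $T_{11}=\frac{1}{2+|S|}\sum_{t\in S}\widehat X(t)^2$, $T_{22}=\frac{1}{2+|S|}\sum_{t\in S}\widehat Y(t)^2$, $T_{12}=\frac{1}{2+|S|}\sum_{t\in S}\widehat X(t)\widehat Y(t)$, and its radius of gyration is $T_{11}+T_{22}$. As $c\to\infty$ these entries are replaced by $\int_0^1\widehat X(t)^2\mu(t)dt$, $\int_0^1\widehat Y(t)^2\mu(t)dt$, $\int_0^1\widehat X(t)\widehat Y(t)\mu(t)dt$, and the limiting average radius of gyration is defined to be $r^2=2\mathbb{E}[\int_0^1\widehat X(t)^2\mu(t)dt]$. *)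

From HB Require Import structures.
From mathcomp Require Import all_boot all_order all_algebra.
From mathcomp Require Import all_classical all_reals all_analysis.
Set Implicit Arguments. Unset Strict Implicit. Unset Printing Implicit Defensive.
Import Order.TTheory GRing.Theory Num.Theory.
Import numFieldNormedType.Exports.
Local Open Scope classical_set_scope.
Local Open Scope ring_scope.

Section defs.
Context {d : measure_display} {T : measurableType d} {R : realType}.
Variable P : probability T R.

Definition gaussian_rv (Z : T -> R) : Prop :=
  measurable_fun setT Z /\
  exists m s : R,
    (s = 0 /\ forall A, measurable A -> P (Z @^-1` A) = \d_m A) \/
    (s != 0 /\ forall A, measurable A -> P (Z @^-1` A) = normal_prob m s A).

Definition gaussian_process (X : R -> T -> R) : Prop :=
  forall (ts : seq R) (a : nat -> R),
    (forall i, (i < size ts)%N -> nth 0 ts i \in `[0, 1]) ->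
    gaussian_rv (fun w => \sum_(i < size ts) a i * X (nth 0 ts i) w).

Definition brownian_bridge (X : R -> T -> R) : Prop :=
  gaussian_process X /\
  P [set w | X 0 w = 0] = 1%E /\ P [set w | X 1 w = 0] = 1%E /\
  (forall t, t \in `[0, 1] -> ('E_P[X t] = 0)%E) /\
  (forall s t, s \in `[0, 1] -> t \in `[0, 1] -> s <= t ->
     (covariance P (X s) (X t) = (s * (1 - t))%:E)%E) /\
  measurable_fun ((`[0, 1] : set R) `*` (setT : set T)) (fun p : R * T => X p.1 p.2).

Definition fdd_event (X : R -> T -> R) (ts : seq R) (A : nat -> set R) : set T :=
  [set w | forall i, (i < size ts)%N -> A i (X (nth 0 ts i) w)].

Definition independent_processes (X Y : R -> T -> R) : Prop :=
  forall (ts us : seq R) (A B : nat -> set R),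
    (forall i, (i < size ts)%N -> nth 0 ts i \in `[0, 1]) ->
    (forall i, (i < size us)%N -> nth 0 us i \in `[0, 1]) ->
    (forall i, measurable (A i)) -> (forall i, measurable (B i)) ->
    P (fdd_event X ts A `&` fdd_event Y us B) =
      (P (fdd_event X ts A) * P (fdd_event Y us B))%E.

Definition avg_radius_gyration (X : R -> T -> R) (mu : R -> R) : \bar R :=
  (2%:E * \int[P]_w (\int[lebesgue_measure]_(t in (`[0%R, 1%R] : set R)) ((X t w) ^+ 2 * mu t)%:E))%E.

End defs.

Definition pdf_on_unit {R : realType} (mu : R -> R) : Prop :=
  measurable_fun setT mu /\ (forall t, 0 <= mu t) /\
  (forall t, t \notin `[0, 1] -> mu t = 0) /\
  (\int[lebesgue_measure]_(t in setT) (mu t)%:E = 1)%E.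

Definition prim {R : realType} (f : R -> R) (t : R) : R :=
  Rintegral lebesgue_measure `[0, t] f.

From mathcomp Require Import all_boot all_order all_algebra.
From mathcomp Require Import all_classical all_reals all_analysis.
From mathcomp Require Import measurable_realfun ring lra.
Import Order.TTheory GRing.Theory Num.Theory.
Import numFieldNormedType.Exports.
Local Open Scope classical_set_scope.
Local Open Scope ring_scope.

(* Tonelli's theorem exchanges the expectation with the time integral and
   E[X(t)^2] = t(1-t) for the Brownian bridge, so r^2 = 2 int_0^1 mu(t) t(1-t) dt.
   Exchanging the order of integration over the triangle 0 <= u <= v <= r turns
   the iterated primitives of mu into its moments,
   M1(r) = int_0^r mu(u)(r-u) du and M2(r) = int_0^r mu(u)(r-u)^2/2 du,
   and t(1-t) = (1-t) - (1-t)^2 concludes. *)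

Section fubini_tonelli_sections.
Local Open Scope ereal_scope.
Context {d1 d2 : measure_display} {T1 : measurableType d1} {T2 : measurableType d2}
  {R : realType}.
Variables (m1 : {sigma_finite_measure set T1 -> \bar R})
  (m2 : {sigma_finite_measure set T2 -> \bar R}).
Variables (E : set (T1 * T2)) (f : T1 * T2 -> \bar R).
Hypotheses (mE : measurable E) (mf : measurable_fun E f)
  (f0 : forall z, E z -> 0 <= f z).

Lemma fubini_tonelli_sections :
  \int[m1]_x \int[m2]_(y in xsection E x) f (x, y) =
  \int[m2]_y \int[m1]_(x in ysection E y) f (x, y).
Proof.
have mfE : measurable_fun setT (f \_ E) by apply/(measurable_restrictT _ mE).
have fE0 z : 0 <= (f \_ E) z by rewrite patchE; case: ifPn => // /set_mem /f0.
transitivity (\int[m1]_x \int[m2]_y (f \_ E) (x, y)).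
  apply: eq_integral => x _; rewrite integral_mkcond.
  by apply: eq_integral => y _; rewrite !patchE mem_xsection.
rewrite (fubini_tonelli _ mfE fE0); apply: eq_integral => y _.
by rewrite [RHS]integral_mkcond; apply: eq_integral => x _; rewrite !patchE mem_ysection.
Qed.

End fubini_tonelli_sections.
Arguments fubini_tonelli_sections {d1 d2 T1 T2 R} m1 m2 {E f}.

Section integral_triangle.
Local Open Scope ereal_scope.
Context {R : realType}.
Local Notation leb := (@lebesgue_measure R).
Variables (l r : R) (a b : R -> R).
Hypotheses (ma : measurable_fun `[l, r] a) (mb : measurable_fun `[l, r] b).
Hypotheses (a0 : {in `[l, r], forall x, (0 <= a x)%R})
  (b0 : {in `[l, r], forall x, (0 <= b x)%R}).

Let triangle := (`[l, r] `*` `[l, r]) `&` [set p : R * R | (p.2 <= p.1)%R].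

Let measurable_triangle : measurable triangle.
Proof.
apply: measurableI; first by apply: measurableX; exact: measurable_itv.
have := measurable_fun_ler (@measurable_snd _ _ R R) (@measurable_fst _ _ R R).
by move/(_ measurableT [set true] I); rewrite setTI.
Qed.

Let xsection_triangle v :
  xsection triangle v = if v \in `[l, r] then [set` `[l, v]] else set0.
Proof.
apply/seteqP; split=> u; rewrite /xsection /triangle /= in_setE /= !in_itv /=.
  by move=> [[/andP[-> ->] /andP[lu _]] uv]; rewrite /= in_itv /= lu uv.
case: ifP => // /andP[lv vr]; rewrite /= in_itv /= => /andP[lu uv].
by rewrite lu uv (le_trans uv vr).
Qed.

Let ysection_triangle u :
  ysection triangle u = if u \in `[l, r] then [set` `[u, r]] else set0.
Proof.
apply/seteqP; split=> v; rewrite /ysection /triangle /= in_setE /= !in_itv /=.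
  by move=> [[/andP[_ vr] /andP[-> ->]] uv]; rewrite /= in_itv /= uv vr.
case: ifP => // /andP[lu ur]; rewrite /= in_itv /= => /andP[uv vr].
by rewrite uv vr (le_trans lu uv).
Qed.

Let patch_in (g : R -> R) x : x \in `[l, r] -> (g \_ `[l, r]) x = g x.
Proof. by move=> xlr; rewrite patchE mem_setE xlr. Qed.

Let patch_ge0 (g : R -> R) x : {in `[l, r], forall x, (0 <= g x)%R} ->
  (0 <= (g \_ `[l, r]) x)%R.
Proof. by move=> g0; rewrite patchE; case: ifPn => // /set_mem; exact: g0. Qed.

Let integralZl_restrict (g : R -> R) (c : R) (D : set R) : measurable D ->
    D `<=` `[l, r] -> measurable_fun `[l, r] g -> {in `[l, r], forall x, (0 <= g x)%R} ->
    (0 <= c)%R ->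
  \int[leb]_(x in D) (c * (g \_ `[l, r]) x)%:E = c%:E * \int[leb]_(x in D) (g x)%:E.
Proof.
move=> mD Dlr mg g0 c0; rewrite -ge0_integralZl_EFin //.
- apply: eq_integral => x /[!inE] Dx.
  by rewrite patch_in ?EFinM //; exact: Dlr.
- by move=> x /Dlr xlr; rewrite lee_fin g0.
- by apply/measurable_EFinP; exact: measurable_funS mg.
Qed.

Lemma integral_triangle_swap :
  \int[leb]_(v in `[l, r]) ((a v)%:E * \int[leb]_(u in `[l, v]) (b u)%:E) =
  \int[leb]_(u in `[l, r]) ((b u)%:E * \int[leb]_(v in `[u, r]) (a v)%:E).
Proof.
pose f p := ((a \_ `[l, r]) p.1 * (b \_ `[l, r]) p.2)%:E.
have mf : measurable_fun triangle f.
  apply: measurable_funS (subsetT _) _ => //.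
  apply/measurable_EFinP/measurable_funM; apply: measurableT_comp => //;
    exact/(measurable_restrictT _ (measurable_itv _)).
have f0 z : triangle z -> 0 <= f z by rewrite lee_fin mulr_ge0 ?patch_ge0.
transitivity (\int[leb]_v \int[leb]_(u in xsection triangle v) f (v, u)).
  rewrite integral_mkcond; apply: eq_integral => v _.
  rewrite xsection_triangle patchE mem_setE; case: ifPn => vlr; last first.
    by rewrite integral_set0.
  rewrite -integralZl_restrict ?a0 //; last first.
    by apply: subset_itvl; rewrite bnd_simp; case/andP: vlr.
  by apply: eq_integral => u _; rewrite /f /= [(a \_ _) v]patch_in.
rewrite (fubini_tonelli_sections leb leb measurable_triangle mf f0).
rewrite [RHS]integral_mkcond; apply: eq_integral => u _.
rewrite ysection_triangle patchE mem_setE; case: ifPn => ulr; last first.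
  by rewrite integral_set0.
rewrite -integralZl_restrict ?b0 //; last first.
  by apply: subset_itvr; rewrite bnd_simp; case/andP: ulr.
by apply: eq_integral => v _; rewrite /f /= [(b \_ _) u]patch_in // mulrC.
Qed.

End integral_triangle.

Section prim.
Local Open Scope ereal_scope.
Context {R : realType} {f : R -> R} {r : R}.
Local Notation leb := (@lebesgue_measure R).
Hypotheses (mf : measurable_fun `[0%R, r] f) (f0 : {in `[0%R, r], forall x, (0 <= f x)%R}).
(* [prim] is [fine] of the extended integral, hence 0 where that integral is
   infinite: finiteness is what makes [prim f] a genuine primitive. *)
Hypothesis f_lty : \int[leb]_(x in `[0%R, r]) (f x)%:E < +oo.

Let itv0_sub {t : R} (tr : (t <= r)%R) : [set` `[0%R, t]] `<=` [set` `[0%R, r]].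
Proof. by apply: subset_itvl; rewrite bnd_simp. Qed.

Let le_integral_itv0 {s t : R} : (s <= t)%R -> (t <= r)%R ->
  \int[leb]_(x in `[0%R, s]) (f x)%:E <= \int[leb]_(x in `[0%R, t]) (f x)%:E.
Proof.
move=> st tr; apply: ge0_subset_integral => //.
- by apply/measurable_EFinP; apply: measurable_funS mf => //; exact: itv0_sub.
- by move=> x /(itv0_sub tr) /f0; rewrite lee_fin.
- by apply: subset_itvl; rewrite bnd_simp.
Qed.

Lemma primE t : (t <= r)%R -> (prim f t)%:E = \int[leb]_(x in `[0%R, t]) (f x)%:E.
Proof.
move=> tr; have int_ge0 : 0 <= \int[leb]_(x in `[0%R, t]) (f x)%:E.
  by apply: integral_ge0 => x /(itv0_sub tr) /f0; rewrite lee_fin.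
rewrite /prim /Rintegral fineK // ge0_fin_numE //.
exact: le_lt_trans (le_integral_itv0 tr (lexx r)) f_lty.
Qed.

Lemma prim_ge0 : {in `[0%R, r], forall t, (0 <= prim f t)%R}.
Proof.
move=> t; rewrite in_itv /= => /andP[_ tr]; rewrite -lee_fin primE //.
by apply: integral_ge0 => x /(itv0_sub tr) /f0; rewrite lee_fin.
Qed.

Lemma le_prim s t : (s <= t)%R -> (t <= r)%R -> (prim f s <= prim f t)%R.
Proof.
move=> st tr; rewrite -lee_fin !primE ?(le_trans st) //.
exact: le_integral_itv0.
Qed.

Lemma measurable_prim : measurable_fun `[0%R, r] (prim f).
Proof.
pose g t := prim f (Order.min t r).
apply: (eq_measurable_fun g); last first.
  apply: nondecreasing_measurable => // s t st.
  by apply: le_prim; [exact: le_min2 | rewrite ge_min lexx orbT].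
by move=> x; rewrite inE /= in_itv /= => /andP[_ xr]; rewrite /g (min_idPl xr).
Qed.

Lemma integral_prim_lty : \int[leb]_(x in `[0%R, r]) (prim f x)%:E < +oo.
Proof.
apply: (@le_lt_trans _ _ (\int[leb]_(x in `[0%R, r]) (cst (prim f r)%:E) x)).
  apply: ge0_le_integral => //.
  - by move=> x /prim_ge0; rewrite lee_fin.
  - by apply/measurable_EFinP; exact: measurable_prim.
  - by move=> x /=; rewrite in_itv /= => /andP[_ xr]; rewrite lee_fin le_prim.
rewrite integral_cst //= lebesgue_measure_itv /=.
by case: ifP => _; rewrite ?mule0 // -EFinM ltry.
Qed.

End prim.

Section itv_integrals.
Local Open Scope ereal_scope.
Context {R : realType}.
Local Notation leb := (@lebesgue_measure R).

Lemma integral_itv_one (u r : R) : (u <= r)%R ->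
  \int[leb]_(v in `[u, r]) 1 = (r - u)%:E.
Proof.
move=> ur; have /= -> := integral_cst leb (measurable_itv `[u, r]) 1.
rewrite mul1e lebesgue_measure_itv /=.
by rewrite lte_fin; case: ltgtP ur => // -> _; rewrite subrr.
Qed.

Lemma integral_itv_subr (u r : R) : (u <= r)%R ->
  \int[leb]_(v in `[u, r]) (r - v)%:E = ((r - u) ^+ 2 / 2)%:E.
Proof.
rewrite le_eqVlt => /predU1P[->|ur].
  by rewrite set_itv1 integral_set1 subrr expr0n /= mul0r.
pose F x := (r * x - x ^+ 2 / 2)%R.
have dF x : derivable F x 1.
  by apply: derivableB; [exact: derivableM | apply: derivableM => //; exact: exprn_derivable].
rewrite (@continuous_FTC2 _ _ F) //.
- by congr (_%:E); rewrite /F; field.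
- apply: continuous_in_subspaceT => x _.
  by apply: (@cvgB _ R^o); [exact: cvg_cst | exact: cvg_id].
- split.
  + by move=> x _; exact: dF.
  + by apply: cvg_at_right_filter; apply: differentiable_continuous; exact/derivable1_diffP.
  + by apply: cvg_at_left_filter; apply: differentiable_continuous; exact/derivable1_diffP.
- move=> x _; rewrite derive1E /F deriveB // ?deriveM //.
  by rewrite derive_id !derive_cst /GRing.scale /=; field.
Qed.

End itv_integrals.

Section prim2.
Local Open Scope ereal_scope.
Context {R : realType} {f : R -> R} {r : R}.
Local Notation leb := (@lebesgue_measure R).
Hypotheses (mf : measurable_fun `[0%R, r] f) (f0 : {in `[0%R, r], forall x, (0 <= f x)%R}).
Hypothesis f_lty : \int[leb]_(x in `[0%R, r]) (f x)%:E < +oo.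

Lemma prim_primE : (prim (prim f) r)%:E = \int[leb]_(u in `[0%R, r]) (f u * (r - u))%:E.
Proof.
rewrite (primE (measurable_prim mf f0 f_lty) (prim_ge0 mf f0 f_lty)
  (integral_prim_lty mf f0 f_lty) _ (lexx r)).
transitivity (\int[leb]_(v in `[0%R, r]) (1 * \int[leb]_(u in `[0%R, v]) (f u)%:E)).
  apply: eq_integral => v; rewrite inE /= in_itv /= => /andP[_ vr].
  by rewrite mul1e (primE mf f0 f_lty _ vr).
rewrite (integral_triangle_swap 0 r (cst 1%R) f) //.
apply: eq_integral => u; rewrite inE /= in_itv /= => /andP[_ ur].
by rewrite integral_itv_one // EFinM.
Qed.

End prim2.

Section prim3.
Local Open Scope ereal_scope.
Context {R : realType} {f : R -> R} {r : R}.
Local Notation leb := (@lebesgue_measure R).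
Hypotheses (mf : measurable_fun `[0%R, r] f) (f0 : {in `[0%R, r], forall x, (0 <= f x)%R}).
Hypothesis f_lty : \int[leb]_(x in `[0%R, r]) (f x)%:E < +oo.

Lemma prim_prim_primE :
  (prim (prim (prim f)) r)%:E = \int[leb]_(u in `[0%R, r]) (f u * ((r - u) ^+ 2 / 2))%:E.
Proof.
rewrite (prim_primE (measurable_prim mf f0 f_lty) (prim_ge0 mf f0 f_lty)
  (integral_prim_lty mf f0 f_lty)).
transitivity (\int[leb]_(v in `[0%R, r]) ((r - v)%:E * \int[leb]_(u in `[0%R, v]) (f u)%:E)).
  apply: eq_integral => v; rewrite inE /= in_itv /= => /andP[_ vr].
  by rewrite EFinM (primE mf f0 f_lty _ vr) muleC.
rewrite (integral_triangle_swap 0 r (fun v => r - v)%R f) //; last 2 first.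
- by apply: measurable_funB => //; exact: measurable_id.
- by move=> v; rewrite in_itv /= subr_ge0 => /andP[].
apply: eq_integral => u; rewrite inE /= in_itv /= => /andP[_ ur].
by rewrite integral_itv_subr // EFinM.
Qed.

Lemma integral_bridge_variance : (0 <= r)%R ->
  \int[leb]_(u in `[0%R, r]) (f u * (u * (r - u)))%:E =
  (r * prim (prim f) r - 2 * prim (prim (prim f)) r)%:E.
Proof.
move=> r0.
have mfM h : measurable_fun `[0%R, r] h ->
    measurable_fun `[0%R, r] (fun u => (f u * h u)%:E).
  by move=> mh; apply/measurable_EFinP/measurable_funM.
have fM_ge0 h : {in `[0%R, r], forall u, 0 <= h u}%R ->
    forall u, [set` `[0%R, r]] u -> 0 <= (f u * h u)%:E.
  by move=> h0 u u0r; rewrite lee_fin mulr_ge0 ?f0 ?h0.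
rewrite EFinB; suff -> : (r * prim (prim f) r)%:E =
    \int[leb]_(u in `[0%R, r]) (f u * (u * (r - u)))%:E +
    (2 * prim (prim (prim f)) r)%:E by rewrite addeK.
rewrite !EFinM (prim_primE mf f0 f_lty) prim_prim_primE -!ge0_integralZl_EFin //.
under eq_integral do rewrite -EFinM mulrCA.
under [X in _ = _ + X]eq_integral do rewrite -EFinM mulrCA.
rewrite -ge0_integralD //.
- by apply: eq_integral => u _; rewrite -EFinD; congr EFin; field.
all: try (apply: fM_ge0 => u; rewrite in_itv /= => /andP[u0 ur]; nra).
all: apply: mfM; repeat (apply: measurable_funM || apply: measurable_funB ||
  apply: measurable_funX || exact: measurable_cst || exact: measurable_id).
Qed.

End prim3.

Lemma measurable_fun_xsection_setX {d1 d2 d3 : measure_display}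
    {T1 : measurableType d1} {T2 : measurableType d2} {T3 : measurableType d3}
    {A : set T1} {f : T1 * T2 -> T3} {x : T1} :
  measurable A -> A x -> measurable_fun (A `*` setT) f ->
  measurable_fun setT (fun y => f (x, y)).
Proof.
move=> mA Ax mf; apply: (measurable_comp (F := A `*` setT)) => //.
- exact: measurableX.
- by move=> _ [y _ <-].
Qed.

Section bridge.
Local Open Scope ereal_scope.
Context {d : measure_display} {T : measurableType d} {R : realType}.
Variables (P : probability T R) (X : R -> T -> R).
Hypothesis bX : brownian_bridge P X.

Lemma bridge_second_moment t : t \in `[0%R, 1%R] ->
  \int[P]_w ((X t w) ^+ 2)%:E = (t * (1 - t))%:E.
Proof.
case: bX => _ [_ [_ [EX [CX _]]]] t01.
rewrite -(CX t t t01 t01 (lexx t)) covariance.unlock (EX t t01) expectation.unlock.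
by apply: eq_integral => w _; rewrite expr2 -[RHS]/((X t w - 0) * (X t w - 0))%:E subr0.
Qed.

Lemma measurable_bridge t : t \in `[0%R, 1%R] -> measurable_fun setT (X t).
Proof.
case: bX => _ [_ [_ [_ [_ mX]]]] t01.
exact: (measurable_fun_xsection_setX (measurable_itv _) t01 mX).
Qed.

Lemma expectation_integral_bridge_sqr (mu : R -> R) :
    measurable_fun (`[0%R, 1%R] : set R) mu -> {in `[0%R, 1%R], forall t, (0 <= mu t)%R} ->
  \int[P]_w \int[lebesgue_measure]_(t in `[0%R, 1%R]) ((X t w) ^+ 2 * mu t)%:E =
  \int[lebesgue_measure]_(t in `[0%R, 1%R]) (mu t * (t * (1 - t)))%:E.
Proof.
move=> mmu mu0; case: (bX) => _ [_ [_ [_ [_ mX]]]].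
pose E : set (R * T) := `[0%R, 1%R] `*` [set: T].
have mE : measurable E by apply: measurableX => //; exact: measurable_itv.
have mF : measurable_fun E (fun p => ((X p.1 p.2) ^+ 2 * mu p.1)%:E).
  apply/measurable_EFinP/measurable_funM; first exact: measurable_funX.
  have mmu_fst : measurable_fun E (mu \o fst).
    apply: measurable_comp mmu _ => //; first by move=> _ [[t w] [t01 _] <-].
    exact: measurable_funS measurable_fst.
  exact: mmu_fst.
have F0 p : E p -> 0 <= ((X p.1 p.2) ^+ 2 * mu p.1)%:E.
  by case=> /mu0 ? _; rewrite lee_fin mulr_ge0 ?sqr_ge0.
transitivity (\int[P]_w \int[lebesgue_measure]_(t in ysection E w) ((X t w) ^+ 2 * mu t)%:E).
  by apply: eq_integral => w _; rewrite in_ysectionX // in_setT.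
rewrite -(fubini_tonelli_sections lebesgue_measure P mE mF F0) [RHS]integral_mkcond.
apply: eq_integral => t _; rewrite patchE; case: ifPn => t01; last first.
  by rewrite notin_xsectionX // integral_set0.
rewrite in_xsectionX //=; rewrite mem_setE in t01.
under eq_integral do rewrite EFinM muleC.
rewrite ge0_integralZl_EFin ?bridge_second_moment ?EFinM //.
- by move=> w _; rewrite lee_fin sqr_ge0.
- by apply/measurable_EFinP/measurable_funX; exact: measurable_bridge.
- exact: mu0.
Qed.

End bridge.

Theorem theorem1 (d : measure_display) (T : measurableType d) (R : realType)
  (P : probability T R) (X Y : R -> T -> R) (mu : R -> R) :
  brownian_bridge P X -> brownian_bridge P Y -> independent_processes P X Y ->
  pdf_on_unit mu ->
  let M0 := prim mu in
  let M1 := prim M0 in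
  let M2 := prim M1 in
  avg_radius_gyration P X mu = (2 * M1 1 - 4 * M2 1)%:E.
Proof.
move=> bX _ _ [mmu [mu0 [_ mu1]]] M0 M1 M2.
have mmu01 : measurable_fun (`[0, 1] : set R) mu by exact: measurable_funS mmu.
have mu0_in : {in `[0%R, 1%R], forall t, 0 <= mu t} by move=> t _; exact: mu0.
have mu_lty : (\int[lebesgue_measure]_(t in `[0%R, 1%R]) (mu t)%:E < +oo)%E.
  rewrite (@le_lt_trans _ _ 1%E) ?ltry // -mu1.
  apply: ge0_subset_integral => //; first exact/measurable_EFinP.
  by move=> t _; rewrite lee_fin.
rewrite /avg_radius_gyration expectation_integral_bridge_sqr //.
rewrite (integral_bridge_variance mmu01 mu0_in mu_lty ler01) -EFinM.
by congr EFin; rewrite /M2 /M1 /M0; ring.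
Qed.
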